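(* Let $\mathcal{L}^{TF}\subseteq\mathcal{L}$ be the sublanguage in which every update model occurring in a formula has all its postconditions in $\{\top,\bot\}$ on their domains (i.e. $\mathsf{post}(\mathsf{e})(p)\in\{\top,\bot\}$ for every event $\mathsf{e}$ and every $p\in\mathrm{dom}(\mathsf{post}(\mathsf{e}))$). Then $\mathcal{L}^{TF}$ and $\mathcal{L}$ are equally expressive: for every formula $\phi\in\mathcal{L}$ there is a formula $\psi\in\mathcal{L}^{TF}$ such that $\phi$ and $\psi$ are true in exactly the same pointed epistemic models.
   Context: Fix a finite set of agents $A$ and countable set of atoms $P$. The language $\mathcal{L}$ is defined by simultaneous induction: $\phi ::= p\mid\neg\phi\mid\phi\wedge\phi\mid[\alpha]\phi$, $\alpha ::= a\mid B^*\mid(\mathsf{U},\mathsf{e})$, $a\in A$, $B\subseteq A$, where an update model $\mathsf{U}=(\mathsf{E},\mathsf{R},\mathsf{pre},\mathsf{post})$ has finite nonempty event set $\mathsf{E}$, $\mathsf{R}:A\to\wp(\mathsf{E}\times\mathsf{E})$, preconditions $\mathsf{pre}:\mathsf{E}\to\mathcal{L}$, and postconditions $\mathsf{post}:\mathsf{E}\to(P\to\mathcal{L})$, each $\mathsf{post}(\mathsf{e})$ differing from the identity on a finite set $\mathrm{dom}(\mathsf{post}(\mathsf{e}))$; $\mathsf{e}\in\mathsf{E}$. Semantics on epistemic models $M=(S,R,V)$ ($R:A\to\wp(S\times S)$, $V:P\to\wp(S)$): atoms via $V$; Booleans standard; $[a]\phi$ holds at $s$ iff $\phi$ holds at all $R(a)$-successors;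 $[B^*]\phi$ iff $\phi$ holds at all states reachable via the reflexive transitive closure of $\bigcup_{a\in B}R(a)$; $(M,s)\models[\mathsf{U},\mathsf{e}]\phi$ iff $(M,s)\models\mathsf{pre}(\mathsf{e})$ implies $(M\otimes\mathsf{U},(s,\mathsf{e}))\models\phi$, where $M\otimes\mathsf{U}$ has domain $\{(t,\mathsf{f}) : (M,t)\models\mathsf{pre}(\mathsf{f})\}$, $((t,\mathsf{f}),(u,\mathsf{g}))$ related for $a$ iff $(t,u)\in R(a)$ and $(\mathsf{f},\mathsf{g})\in\mathsf{R}(a)$, and $(t,\mathsf{f})$ satisfies $p$ iff $(M,t)\models\mathsf{post}(\mathsf{f})(p)$. *)

From mathcomp Require Import all_boot.
From Stdlib Require Import Relations.
Set Implicit Arguments. Unset Strict Implicit. Unset Printing Implicit Defensive.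

Section Syntax.
Variables (A : finType) (P : countType).

(* An update model with
   event set E = 'I_n.+1 (finite, nonempty), accessibility R : A -> rel E,
   preconditions pre : E -> form, postconditions post : E -> seq (P * form)
   (a finite list of substitutions; post(e)(p) is the first binding of p in
   the list, or p itself if there is none), and actual event e. *)
Inductive form : Type :=
  | Atom of P
  | Neg of form
  | And of form & form
  | Box of prog & form
with prog : Type :=
  | Ag of A
  | Star of {set A}
  | Upd (n : nat) (R : A -> rel 'I_n.+1) (pre : 'I_n.+1 -> form)
        (post : 'I_n.+1 -> seq (P * form)) (e : 'I_n.+1).

Fixpoint lookup (l : seq (P * form)) (p : P) : option form :=
  match l with
  | [::] => None
  | (q, phi) :: l' => if q == p then Some phi else lookup l' p
  end.

Definition postval (l : seq (P * form)) (p : P) : form :=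
  odflt (Atom p) (lookup l p).

Definition is_bot (f : form) : Prop := exists q, f = And (Atom q) (Neg (Atom q)).
Definition is_top (f : form) : Prop := exists q, f = Neg (And (Atom q) (Neg (Atom q))).

(* The sublanguage L^TF: every update model occurring in the formula has
   post(e)(p) in {top, bot} for every p in dom(post(e)) = {p | post(e)(p) <> p}. *)
Fixpoint TF (f : form) : Prop :=
  match f with
  | Atom _ => True
  | Neg g => TF g
  | And g h => TF g /\ TF h
  | Box a g =>
      TF g /\
      match a with
      | Ag _ => True
      | Star _ => True
      | Upd n R pre post e =>
          (forall x, TF (pre x)) /\
          (forall x, (fix allTF (l : seq (P * form)) : Prop :=
                        match l with
                        | [::] => True
                        | (_, phi) :: l' => TF phi /\ allTF l'
                        end) (post x)) /\
          (forall x p, postval (post x) p <> Atom p ->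
                 is_top (postval (post x) p) \/ is_bot (postval (post x) p))
      end
  end.

Record model (S : Type) := Model {
  mrel : A -> S -> S -> Prop;
  mval : P -> S -> Prop }.

(* Satisfaction; the product update M (x) U has as domain the subtype of
   pairs (t, f) with (M,t) |= pre(f). *)
Fixpoint sat (S : Type) (M : model S) (s : S) (f : form) {struct f} : Prop :=
  match f with
  | Atom p => mval M p s
  | Neg g => ~ sat M s g
  | And g h => sat M s g /\ sat M s h
  | Box a g =>
      match a with
      | Ag i => forall t, mrel M i s t -> sat M t g
      | Star B =>
          forall t, clos_refl_trans S (fun x y => exists i, i \in B /\ mrel M i x y) s t ->
                    sat M t g
      | Upd n R pre post e =>
          forall H : sat M s (pre e),
            sat (@Model {x : S * 'I_n.+1 | sat M x.1 (pre x.2)}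
                   (fun i x y => mrel M i (proj1_sig x).1 (proj1_sig y).1 /\
                                 R i (proj1_sig x).2 (proj1_sig y).2)
                   (fun p x =>
                      (fix look (l : seq (P * form)) : Prop :=
                         match l with
                         | [::] => mval M p (proj1_sig x).1
                         | (q, phi) :: l' =>
                             if q == p then sat M (proj1_sig x).1 phi else look l'
                         end) (post (proj1_sig x).2)))
                (exist _ (s, e) H) g
      end
  end.

End Syntax.

(* Which of the formulas post(x)(p) hold is settled by the state before the update.  So
   split every event x into events (x, b), one for each truth assignment b to these
   formulas, with precondition pre(x) /\ (the literals of b) and postconditions p := top
   or bot as b prescribes.  Forgetting b is a bisimulation between the two product
   updates, and modal truth is bisimulation invariant, so [U, e] g is equivalent to the
   conjunction of the [U', (e, b)] g over all b.  Applying this innermost-first turns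
   every formula into an equivalent one of L^TF. *)

From mathcomp Require Import all_boot.
From Stdlib Require Import Relations Classical.
Set Implicit Arguments. Unset Strict Implicit. Unset Printing Implicit Defensive.

Section Translation.
Variables (A : finType) (P : countType).
Local Notation form := (form A P).
Local Notation prog := (prog A P).
Local Notation model := (model A P).

(* A [fix] over the list alone, so that [all_post TF] is convertible to the one inside [TF]. *)
Definition all_post (Q : form -> Prop) : seq (P * form) -> Prop :=
  fix all_Q l := if l is (_, phi) :: l' then Q phi /\ all_Q l' else True.

Definition all_prog (Q : form -> Prop) (a : prog) : Prop :=
  if a is Upd n R pre post e then (forall x, Q (pre x)) /\ (forall x, all_post Q (post x))
  else True.

Section NestedInduction.
Variable Q : form -> Prop.
Hypotheses (QAtom : forall p, Q (Atom A p)) (QNeg : forall f, Q f -> Q (Neg f))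
  (QAnd : forall f g, Q f -> Q g -> Q (And f g))
  (QBox : forall a g, all_prog Q a -> Q g -> Q (Box a g)).

Fixpoint form_nested_ind (f : form) : Q f :=
  match f with
  | Atom p => QAtom p
  | Neg g => QNeg (form_nested_ind g)
  | And g h => QAnd (form_nested_ind g) (form_nested_ind h)
  | Box a g => QBox (prog_nested_ind a) (form_nested_ind g)
  end
with prog_nested_ind (a : prog) : all_prog Q a :=
  match a return all_prog Q a with
  | Upd n R pre post e => conj (fun x => form_nested_ind (pre x))
      (fun x => (fix all_post_ind (l : seq (P * form)) : all_post Q l :=
          match l return all_post Q l with
          | [::] => I
          | (_, phi) :: l' => conj (form_nested_ind phi) (all_post_ind l')
          end) (post x))
  | _ => I
  end.

End NestedInduction.

Lemma all_post_impl (Q Q' : form -> Prop) l :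
  (forall f, Q f -> Q' f) -> all_post Q l -> all_post Q' l.
Proof. by move=> QQ'; elim: l => [|[q phi] l IHl] //= [/QQ' ? /IHl]. Qed.

Definition post_sat S (M : model S) (t : S) (p : P) :=
  fix look (l : seq (P * form)) : Prop :=
    match l with
    | [::] => mval M p t
    | (q, phi) :: l' => if q == p then sat M t phi else look l'
    end.

Lemma post_sat_iff S T (M : model S) (N : model T) s t p l :
  (mval M p s <-> mval N p t) -> all_post (fun f => sat M s f <-> sat N t f) l ->
  (post_sat M s p l <-> post_sat N t p l).
Proof. by move=> Hp; elim: l => [|[q phi] l IHl] //= [Hphi /IHl]; case: (q == p). Qed.

Lemma post_sat_map S (M : model S) t p (h : form -> form) l :
  all_post (fun f => sat M t f <-> sat M t (h f)) l ->
  (post_sat M t p l <-> post_sat M t p [seq (qp.1, h qp.2) | qp <- l]).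
Proof. by elim: l => [|[q phi] l IHl] //= [Hphi /IHl]; case: (q == p). Qed.

Definition upd_model S (M : model S) n (R : A -> rel 'I_n.+1) (pre : 'I_n.+1 -> form)
    (post : 'I_n.+1 -> seq (P * form)) :=
  @Model A P {x : S * 'I_n.+1 | sat M x.1 (pre x.2)}
    (fun i x y => mrel M i (sval x).1 (sval y).1 /\ R i (sval x).2 (sval y).2)
    (fun p x => post_sat M (sval x).1 p (post (sval x).2)).

Lemma sat_Box_Upd S (M : model S) s n R pre post e g :
  sat M s (Box (@Upd A P n R pre post e) g) =
  forall H : sat M s (pre e), sat (upd_model M R pre post) (exist _ (s, e) H) g.
Proof. by []. Qed.

Lemma sat_Box_congr g g' :
  (forall S (M : model S) s, sat M s g <-> sat M s g') ->
  forall S (M : model S) s a, sat M s (Box a g) <-> sat M s (Box a g').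
Proof.
move=> Hg S M s [i | B | n R pre post e]; last rewrite !sat_Box_Upd;
  [ by split=> H t Ht; apply/Hg; apply: H .. | by split=> H He; apply/Hg; apply: H ].
Qed.

Record bisim S T (M : model S) (N : model T) (Z : S -> T -> Prop) := {
  bisim_val : forall s t p, Z s t -> (mval M p s <-> mval N p t);
  bisim_forth : forall i s t s', Z s t -> mrel M i s s' ->
    exists2 t', mrel N i t t' & Z s' t';
  bisim_back : forall i t s t', Z s t -> mrel N i t t' ->
    exists2 s', mrel M i s s' & Z s' t' }.

Lemma bisim_eq S (M : model S) : bisim M M eq.
Proof. by split=> [s t p <- | i s t s' <- ss' | i t s t' -> tt']; [| exists s' | exists t']. Qed.

Lemma bisim_converse S T (M : model S) (N : model T) Z :
  bisim M N Z -> bisim N M (fun t s => Z s t).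
Proof.
case=> Hval Hforth Hback; split=> [t s p Zst | i t s t' | i s t s'].
- exact: iff_sym (Hval _ _ p Zst).
- exact: Hback.
- exact: Hforth.
Qed.

Lemma bisim_star_forth S T (M : model S) (N : model T) Z (B : {set A}) :
  bisim M N Z -> forall s t s', Z s t ->
  clos_refl_trans S (fun x y => exists i, i \in B /\ mrel M i x y) s s' ->
  exists2 t', clos_refl_trans T (fun x y => exists i, i \in B /\ mrel N i x y) t t' & Z s' t'.
Proof.
move=> HZ s t s' Zst ss'; elim: ss' t Zst => [x y [i [iB xy]] | x | x y z _ IHxy _ IHyz] t Zxt.
- have [t' tt' Zyt'] := bisim_forth HZ Zxt xy.
  by exists t' => //; apply: rt_step; exists i.
- by exists t => //; apply: rt_refl.
- have [t1 tt1 Zyt1] := IHxy _ Zxt; have [t2 t1t2 Zzt2] := IHyz _ Zyt1.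
  by exists t2 => //; apply: rt_trans t1t2.
Qed.

Lemma box_transfer S T (RM : S -> S -> Prop) (RN : T -> T -> Prop) Z
    (PM : S -> Prop) (PN : T -> Prop) :
  (forall s t s', Z s t -> RM s s' -> exists2 t', RN t t' & Z s' t') ->
  (forall t s t', Z s t -> RN t t' -> exists2 s', RM s s' & Z s' t') ->
  (forall s t, Z s t -> (PM s <-> PN t)) ->
  forall s t, Z s t -> ((forall s', RM s s' -> PM s') <-> (forall t', RN t t' -> PN t')).
Proof.
move=> forth back PMN s t Zst; split=> H.
- by move=> t' /(back _ _ _ Zst) [s' /H ? /PMN <-].
- by move=> s' /(forth _ _ _ Zst) [t' /H ? /PMN ->].
Qed.

Section UpdateBisimulation.
Variables (S T : Type) (M : model S) (N : model T) (Z : S -> T -> Prop).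
Variables (m n : nat) (R' : A -> rel 'I_m.+1) (pre' : 'I_m.+1 -> form)
  (post' : 'I_m.+1 -> seq (P * form)) (R : A -> rel 'I_n.+1) (pre : 'I_n.+1 -> form)
  (post : 'I_n.+1 -> seq (P * form)) (d : 'I_m.+1 -> 'I_n.+1).
Hypotheses (HZ : bisim M N Z) (R'E : forall a i j, R' a i j = R a (d i) (d j))
  (pre'_pre : forall s t i, Z s t -> sat M s (pre' i) -> sat N t (pre (d i)))
  (pre_pre' : forall s t x, Z s t -> sat N t (pre x) -> exists2 i, d i = x & sat M s (pre' i))
  (post'E : forall s t i p, Z s t -> sat M s (pre' i) ->
     (post_sat M s p (post' i) <-> post_sat N t p (post (d i)))).

Definition upd_rel (y : {y : S * 'I_m.+1 | sat M y.1 (pre' y.2)})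
    (x : {x : T * 'I_n.+1 | sat N x.1 (pre x.2)}) :=
  Z (sval y).1 (sval x).1 /\ d (sval y).2 = (sval x).2.

Lemma bisim_upd_model : bisim (upd_model M R' pre' post') (upd_model N R pre post) upd_rel.
Proof.
split.
- by move=> [[s i] Hi] [[t _] _] p [/= Zst <-]; exact: post'E.
- move=> a [[s i] Hi] [[t _] _] [[s' i'] Hi'] [/= Zst <-] [/= ss' ii'].
  have [t' tt' Zst'] := bisim_forth HZ Zst ss'.
  exists (exist _ (t', d i') (pre'_pre Zst' Hi')) => //.
  by split=> //=; rewrite -R'E.
- move=> a [[t _] _] [[s i] Hi] [[t' x'] Hx'] [/= Zst <-] [/= tt' ix'].
  have [s' ss' Zst'] := bisim_back HZ Zst tt'.
  have [i' di' Hi'] := pre_pre' Zst' Hx'.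
  by exists (exist _ (s', i') Hi'); split=> //=; rewrite R'E di'.
Qed.

Lemma sat_Box_Upd_bisim g s t x :
  (forall y z, upd_rel y z -> (sat (upd_model M R' pre' post') y g <->
                                sat (upd_model N R pre post) z g)) ->
  Z s t ->
  (sat N t (Box (Upd R pre post x) g) <->
   forall i, d i = x -> sat M s (Box (Upd R' pre' post' i) g)).
Proof.
move=> Hg Zst; rewrite sat_Box_Upd; split=> [H i dix Hi | H Hx].
- by subst x; apply: (proj2 (Hg _ _ _)) (H (pre'_pre Zst Hi)); split.
- have [i dix Hi] := pre_pre' Zst Hx.
  by apply: (proj1 (Hg (exist _ (s, i) Hi) _ _)) (H i dix Hi).
Qed.

End UpdateBisimulation.

Lemma bisim_sat S T (M : model S) (N : model T) Z f :
  bisim M N Z -> forall s t, Z s t -> (sat M s f <-> sat N t f).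
Proof.
elim/form_nested_ind: f S T M N Z => [p | f IHf | f g IHf IHg | a g IHa IHg]
  S T M N Z HZ s t Zst.
- exact: bisim_val Zst.
- by rewrite /= (IHf _ _ _ _ _ HZ _ _ Zst).
- by rewrite /= (IHf _ _ _ _ _ HZ _ _ Zst) (IHg _ _ _ _ _ HZ _ _ Zst).
case: a IHa => [i | B | n R pre post x] IHa.
- rewrite /=; exact: box_transfer (bisim_forth HZ (i := i)) (bisim_back HZ (i := i))
    (IHg _ _ _ _ _ HZ) _ _ Zst.
- rewrite /=; exact: box_transfer (bisim_star_forth (B := B) HZ)
    (bisim_star_forth (B := B) (bisim_converse HZ))
    (IHg _ _ _ _ _ HZ) _ _ Zst.
case: IHa => IHpre IHpost.
have pre_pre s' t' y : Z s' t' -> sat M s' (pre y) -> sat N t' (pre y).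
  by move=> /(IHpre y _ _ _ _ _ HZ) ->.
have pre_pre' s' t' y : Z s' t' -> sat N t' (pre y) -> exists2 i, i = y & sat M s' (pre i).
  by move=> /(IHpre y _ _ _ _ _ HZ) <-; exists y.
have postE s' t' y p : Z s' t' -> sat M s' (pre y) ->
    (post_sat M s' p (post y) <-> post_sat N t' p (post y)).
  move=> Zst' _; apply: post_sat_iff; first exact: bisim_val Zst'.
  by apply: all_post_impl (IHpost y) => f /(_ _ _ _ _ _ HZ _ _ Zst').
have HZU := bisim_upd_model (R := R) HZ (fun _ _ _ => erefl) pre_pre pre_pre' postE.
rewrite (sat_Box_Upd_bisim pre_pre pre_pre' _ (IHg _ _ _ _ _ HZU) Zst).
by split=> [H i -> // | ]; apply.
Qed.

Lemma sat_Box_Upd_cover S (M : model S) m n (R' : A -> rel 'I_m.+1) pre' post'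
    (R : A -> rel 'I_n.+1) pre post (d : 'I_m.+1 -> 'I_n.+1) :
  (forall a i j, R' a i j = R a (d i) (d j)) ->
  (forall t i, sat M t (pre' i) -> sat M t (pre (d i))) ->
  (forall t x, sat M t (pre x) -> exists2 i, d i = x & sat M t (pre' i)) ->
  (forall t i p, sat M t (pre' i) ->
     (post_sat M t p (post' i) <-> post_sat M t p (post (d i)))) ->
  forall s x g, sat M s (Box (Upd R pre post x) g) <->
    forall i, d i = x -> sat M s (Box (Upd R' pre' post' i) g).
Proof.
move=> R'E pre'_pre pre_pre' post'E.
have pre'_pre_eq u v i : u = v -> sat M u (pre' i) -> sat M v (pre (d i)).
  by move=> <-; apply: pre'_pre.
have pre_pre'_eq u v y : u = v -> sat M v (pre y) -> exists2 i, d i = y & sat M u (pre' i).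
  by move=> ->; apply: pre_pre'.
have post'E_eq u v i p : u = v -> sat M u (pre' i) ->
    (post_sat M u p (post' i) <-> post_sat M v p (post (d i))).
  by move=> <-; apply: post'E.
move=> s x g; have HU := bisim_upd_model (bisim_eq M) R'E pre'_pre_eq pre_pre'_eq post'E_eq.
exact: (sat_Box_Upd_bisim pre'_pre_eq pre_pre'_eq x (bisim_sat g HU) (erefl s)).
Qed.

Lemma sat_Box_Upd_congr S (M : model S) n (R : A -> rel 'I_n.+1) pre pre2 post post2 s x g :
  (forall t y, sat M t (pre y) <-> sat M t (pre2 y)) ->
  (forall t y p, post_sat M t p (post y) <-> post_sat M t p (post2 y)) ->
  (sat M s (Box (Upd R pre post x) g) <-> sat M s (Box (Upd R pre2 post2 x) g)).
Proof.
move=> preE postE.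
rewrite (@sat_Box_Upd_cover _ _ _ _ R pre2 post2 R pre post id) //.
- by split=> [H | H i -> //]; apply: H.
- by move=> t i /preE.
- by move=> t y /preE; exists y.
- by move=> t i p _; rewrite postE.
Qed.

Definition bot_form (q : P) : form := And (Atom A q) (Neg (Atom A q)).
Definition top_form (q : P) : form := Neg (bot_form q).

Fixpoint post_lits (base : form) (l : seq (P * form)) (bs : seq bool) : form :=
  match l, bs with
  | (_, phi) :: l', b :: bs' => And (if b then phi else Neg phi) (post_lits base l' bs')
  | _, _ => base
  end.

Fixpoint post_consts (l : seq (P * form)) (bs : seq bool) : seq (P * form) :=
  match l, bs with
  | (q, _) :: l', b :: bs' => (q, if b then top_form q else bot_form q) :: post_consts l' bs'
  | _, _ => [::]
  end.

Lemma sat_post_lits_base S (M : model S) t base l bs :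
  sat M t (post_lits base l bs) -> sat M t base.
Proof. by elim: l bs => [|[q phi] l IHl] [|b bs] //= [_ /IHl]. Qed.

Lemma exists_sat_post_lits S (M : model S) t base l :
  sat M t base -> exists bs : (size l).-tuple bool, sat M t (post_lits base l bs).
Proof.
move=> Hbase; elim: l => [|[q phi] l [bs IHl]]; first by exists [tuple].
have [Hphi | Hphi] := classic (sat M t phi).
- by exists [tuple of true :: bs].
- by exists [tuple of false :: bs].
Qed.

Lemma post_sat_post_consts S (M : model S) t p base l bs : size bs = size l ->
  sat M t (post_lits base l bs) ->
  (post_sat M t p (post_consts l bs) <-> post_sat M t p l).
Proof.
elim: l bs => [|[q phi] l IHl] [|b bs] //= /succn_inj /IHl IH [Hb /IH {}IH].
case: (q == p) => //.
by case: b Hb => /=; tauto.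
Qed.

Lemma postval_post_consts l bs p : postval (post_consts l bs) p <> Atom A p ->
  is_top (postval (post_consts l bs) p) \/ is_bot (postval (post_consts l bs) p).
Proof.
rewrite /postval; elim: l bs => [|[q phi] l IHl] [|b bs] //= .
by case: (q == p) => [_ | /IHl //]; case: b; [left | right]; exists q.
Qed.

Lemma TF_post_lits base l bs : TF base -> all_post (@TF A P) l -> TF (post_lits base l bs).
Proof.
by move=> Hbase; elim: l bs => [|[q phi] l IHl] [|b bs] //= [Hphi /IHl]; case: b.
Qed.

Lemma TF_post_consts l bs : all_post (@TF A P) (post_consts l bs).
Proof. by elim: l bs => [|[q phi] l IHl] [|b bs] //=; case: b. Qed.

(* [g] only provides the empty conjunction [~ (g /\ ~ g)]: there may be no atom to build
   a constant from. *)
Definition big_And (g : form) (fs : seq form) : form :=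
  foldr (@And A P) (Neg (And g (Neg g))) fs.

Lemma sat_big_And_map S (M : model S) s g (I : eqType) (r : seq I) (F : I -> form) :
  sat M s (big_And g [seq F i | i <- r]) <-> forall i, i \in r -> sat M s (F i).
Proof.
elim: r => [|i r IHr] /=; first by split=> // _ [].
rewrite IHr; split=> [[Hi Hr] j | H].
- by rewrite in_cons => /predU1P [-> | /Hr].
- by split=> [|j Hj]; apply: H; rewrite in_cons ?eqxx ?Hj ?orbT.
Qed.

Lemma TF_big_And_map g (I : Type) (r : seq I) (F : I -> form) :
  TF g -> (forall i, TF (F i)) -> TF (big_And g [seq F i | i <- r]).
Proof. by move=> Hg HF; elim: r => //= i r ->; split. Qed.

Lemma TF_Box_Upd n (R : A -> rel 'I_n.+1) pre post e g :
  TF (Box (Upd R pre post e) g) =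
  (TF g /\ (forall x, TF (pre x)) /\ (forall x, all_post (@TF A P) (post x)) /\
    (forall x p, postval (post x) p <> Atom A p ->
       is_top (postval (post x) p) \/ is_bot (postval (post x) p))).
Proof. reflexivity. Qed.

(* Events of update models are ordinals ['I_k.+1]. *)
Definition nth_enum (T : finType) (t0 : T) (i : 'I_#|T|.-1.+1) : T := nth t0 (enum T) i.

Lemma nth_enum_surj (T : finType) (t0 x : T) : exists i, nth_enum t0 i = x.
Proof.
have card_gt0 : 0 < #|T| by apply/card_gt0P; exists x.
have x_lt : index x (enum T) < #|T|.-1.+1 by rewrite prednK // cardE index_mem mem_enum.
by exists (Ordinal x_lt); rewrite /nth_enum nth_index ?mem_enum.
Qed.

Section Split.
Variables (n : nat) (R : A -> rel 'I_n.+1) (pre : 'I_n.+1 -> form)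
  (post : 'I_n.+1 -> seq (P * form)).

Definition split_event := {x : 'I_n.+1 & (size (post x)).-tuple bool}.
Local Notation m := #|{: split_event}|.-1.

Definition split_event0 : split_event := existT _ ord0 (nseq_tuple _ false).
Definition split_dec : 'I_m.+1 -> split_event := nth_enum split_event0.
Definition split_R (a : A) : rel 'I_m.+1 :=
  fun i j => R a (tag (split_dec i)) (tag (split_dec j)).
Definition split_pre (i : 'I_m.+1) : form :=
  post_lits (pre (tag (split_dec i))) (post (tag (split_dec i))) (tagged (split_dec i)).
Definition split_post (i : 'I_m.+1) : seq (P * form) :=
  post_consts (post (tag (split_dec i))) (tagged (split_dec i)).

Definition tf_box (e : 'I_n.+1) (g : form) : form :=
  big_And g [seq Box (Upd split_R split_pre split_post i) g
            | i <- enum 'I_m.+1 & tag (split_dec i) == e].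

Lemma sat_tf_box S (M : model S) s e g :
  sat M s (Box (Upd R pre post e) g) <-> sat M s (tf_box e g).
Proof.
rewrite sat_big_And_map (sat_Box_Upd_cover (d := fun i => tag (split_dec i))) //.
- split=> H i; last by move=> die; apply: H; rewrite mem_filter die eqxx mem_enum.
  by rewrite mem_filter mem_enum andbT => /eqP; apply: H.
- by move=> t i; apply: sat_post_lits_base.
- move=> t x /(exists_sat_post_lits (post x)) [bs Hbs].
  have [i di] := nth_enum_surj split_event0 (existT _ x bs).
  by exists i; rewrite /split_pre /split_dec di.
- by move=> t i p; apply: post_sat_post_consts; rewrite size_tuple.
Qed.

Lemma TF_tf_box e g :
  TF g -> (forall x, TF (pre x)) -> (forall x, all_post (@TF A P) (post x)) ->
  TF (tf_box e g).
Proof.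
move=> Hg Hpre Hpost; apply: TF_big_And_map => // i; rewrite TF_Box_Upd.
split=> //; split=> [x | ]; first exact: TF_post_lits.
by split=> [x | x p]; [exact: TF_post_consts | exact: postval_post_consts].
Qed.

End Split.

Fixpoint tf_form (f : form) : form :=
  match f with
  | Atom p => Atom A p
  | Neg g => Neg (tf_form g)
  | And g h => And (tf_form g) (tf_form h)
  | Box (Upd n R pre post e) g =>
      tf_box R (fun x => tf_form (pre x))
        (fun x => [seq (qp.1, tf_form qp.2) | qp <- post x]) e (tf_form g)
  | Box a g => Box a (tf_form g)
  end.

Lemma all_post_map (Q : form -> Prop) (h : form -> form) l :
  all_post (fun f => Q (h f)) l -> all_post Q [seq (qp.1, h qp.2) | qp <- l].
Proof. by elim: l => [|[q phi] l IHl] //= [? /IHl]. Qed.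

Lemma TF_tf_form f : TF (tf_form f).
Proof.
elim/form_nested_ind: f => //= [a g IHa IHg].
case: a IHa => [i | B | n R pre post e] //= [IHpre IHpost].
by apply: TF_tf_box => // x; apply: all_post_map (IHpost x).
Qed.

Lemma sat_tf_form f S (M : model S) s : sat M s f <-> sat M s (tf_form f).
Proof.
elim/form_nested_ind: f S M s => [p | f IHf | f g IHf IHg | a g IHa IHg] S M s.
- by [].
- by rewrite /= IHf.
- by rewrite /= IHf IHg.
case: a IHa => [i | B | n R pre post e] IHa; rewrite [tf_form _]/=.
- by apply: (sat_Box_congr IHg).
- by apply: (sat_Box_congr IHg).
case: IHa => IHpre IHpost; rewrite -sat_tf_box -(sat_Box_congr IHg).
apply: sat_Box_Upd_congr => [t x | t x p]; first exact: IHpre.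
by apply: post_sat_map; apply: all_post_impl (IHpost x) => f ->.
Qed.

End Translation.

Theorem corollary3 (A : finType) (P : countType) (phi : form A P) :
  exists psi : form A P, TF psi /\
    forall (S : Type) (M : model A P S) (s : S), sat M s phi <-> sat M s psi.
Proof. by exists (tf_form phi); split; [apply: TF_tf_form | apply: sat_tf_form]. Qed.
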